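(* For all integers $v\geq 1$ and $L\geq 0$, \[ \sum_{n_1,\ldots,n_v\geq 0} \frac{q^{\sum_{i=1}^v N_i(N_i+1)+n_v}}{(q)_{n_1}\cdots(q)_{n_{v-1}}(q)_{1+2n_v}}\,\frac{(-1;q^3)_{n_v}}{(-1;q)_{n_v}}\,\frac{(q)_{2L+1}}{(q)_{L-N_1}}\,(1+q-q^{1+n_v}) =\sum_{j=-\infty}^{\infty}\left(\frac{j}{3}\right) q^{\frac{(2v+1)j^2-(2v+3)j}{2}+1} {2L+1 \brack L+j}_q, \] where $N_i=n_i+n_{i+1}+\cdots+n_v$ for $i=1,\ldots,v$ (for $v=1$ the product $(q)_{n_1}\cdots(q)_{n_{v-1}}$ is empty).
   Context: For a variable $a$ and integer $n\ge 0$, $(a;q)_n=(1-a)(1-aq)\cdots(1-aq^{n-1})$, and $(q)_n=(q;q)_n$; by convention $1/(q)_n=0$ for negative integers $n$. The $q$-binomial coefficient is ${A \brack B}_q=\frac{(q;q)_A}{(q;q)_B(q;q)_{A-B}}$ if $0\le B\le A$ are integers, and $0$ otherwise. $\left(\frac{j}{3}\right)$ is the Legendre symbol modulo 3: it equals $1$ if $j\equiv 1 \pmod 3$, $-1$ if $j\equiv -1\pmod 3$, and $0$ if $3\mid j$. *)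

From mathcomp Require Import all_boot all_order all_algebra.
Set Implicit Arguments. Unset Strict Implicit. Unset Printing Implicit Defensive.
Import Order.TTheory GRing.Theory Num.Theory.
Local Open Scope ring_scope.

Section QDefs.
Variable R : numFieldType.
Implicit Types (q a : R).

Definition qpoch a q (n : nat) : R := \prod_(i < n) (1 - a * q ^+ i).

Definition qfac q (n : nat) : R := qpoch q q n.

(* 1/(q)_n for an integer n, with the convention 1/(q)_n = 0 for n < 0 *)
Definition inv_qfac q (n : int) : R :=
  match n with Posz m => (qfac q m)^-1 | Negz _ => 0 end.

Definition qbinom q (A B : int) : R :=
  match A, B with
  | Posz a, Posz b => if (b <= a)%N then qfac q a / (qfac q b * qfac q (a - b)) else 0
  | _, _ => 0
  end.

Definition leg3 (j : int) : R :=
  if (j %% 3)%Z == 1 then 1 else if (j %% 3)%Z == 2 then -1 else 0.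

(* For n : 'I_v -> nat encoding (n_1,...,n_v) as (n 0, ..., n (v-1)):
   N_{i+1} = n_{i+1} + ... + n_v *)
Definition Ncap (v : nat) (n : 'I_v -> nat) (i : nat) : nat :=
  \sum_(k < v | (i <= k)%N) n k.

Definition nlast (v : nat) (n : 'I_v -> nat) : nat :=
  \sum_(k < v | val k == v.-1) n k.

Definition lhs_term (v L : nat) q (n : 'I_v -> nat) : R :=
  let nv := nlast n in
  let N1 := Ncap n 0 in
  q ^+ ((\sum_(i < v) Ncap n i * (Ncap n i).+1) + nv)
  * (\prod_(k < v | (val k < v.-1)%N) (qfac q (n k))^-1)
  * (qfac q (1 + 2 * nv))^-1
  * (qpoch (-1) (q ^+ 3) nv / qpoch (-1) q nv)
  * (qfac q (2 * L + 1) * inv_qfac q (L%:Z - N1%:Z))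
  * (1 + q - q ^+ (1 + nv)).

(* exponent ((2v+1) j^2 - (2v+3) j)/2 + 1 (the numerator is always even) *)
Definition rhs_exp (v : nat) (j : int) : int :=
  ((((2 * v + 1)%N%:Z * j ^+ 2 - (2 * v + 3)%N%:Z * j) %/ 2)%Z + 1).

Definition rhs_term (v L : nat) q (j : int) : R :=
  leg3 j * q ^ rhs_exp v j * qbinom q (2 * L + 1)%N%:Z (L%:Z + j).

End QDefs.

(* The identity is the [v]-th step of a Bailey chain relative to [a = q],
   started from the Bailey pair
     alpha_r = ((r+1)/3) q^C(r,2) - (r/3) q^C(r+2,2),
     beta_L  = q^L (-1;q^3)_L (1 + q - q^(L+1)) / ((q)_(2L+1) (-1;q)_L).
   That this is a Bailey pair is seen over R[w], w^2 + w + 1 = 0: there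
   (-1;q^3)_L / (-1;q)_L = prod_(i<L) (1 + w q^i) (1 + w^2 q^i), the finite
   Jacobi triple product expands the product, and its coefficient of [w]
   produces the Legendre symbols.  Each application of Bailey's lemma
   multiplies alpha_r by q^(r(r+1)) and adds one summation index to beta, so
   after [v] steps (q)_(2L+1) beta_L is the left-hand multiple sum, while
   sum_r alpha_r (q)_(2L+1) / ((q)_(L-r) (q)_(L+r+1)) is the right-hand side,
   the two parts of alpha_r giving its terms j = r + 1 and j = -r. *)

From HB Require Import structures.
From mathcomp Require Import all_boot all_order all_algebra.
From mathcomp Require Import ring zify.
Set Implicit Arguments. Unset Strict Implicit. Unset Printing Implicit Defensive.
Import Order.TTheory GRing.Theory Num.Theory.
Local Open Scope ring_scope.

Section QFactorial.
Variables (R : numFieldType) (q : R).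
Hypothesis hq : `|q| < 1.

Local Notation f := (qfac q).

Lemma qfac0 : f 0 = 1.
Proof. by rewrite /qfac /qpoch big_ord0. Qed.

Lemma qfacS n : f n.+1 = f n * (1 - q ^+ n.+1).
Proof. by rewrite /qfac /qpoch big_ord_recr /= exprS. Qed.

Lemma norm_qexpS_lt1 n : `|q ^+ n.+1| < 1.
Proof. by rewrite normrX exprn_ilt1. Qed.

Lemma qfac_step_neq0 n : 1 - q ^+ n.+1 != 0.
Proof.
rewrite subr_eq0; apply: contraTneq (norm_qexpS_lt1 n) => <-.
by rewrite normr1 ltxx.
Qed.

Lemma qfac_neq0 n : f n != 0.
Proof.
elim: n => [|n IH]; first by rewrite qfac0 oner_neq0.
by rewrite qfacS mulf_neq0 ?qfac_step_neq0.
Qed.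

Lemma oneDqexp_neq0 i : 1 + q ^+ i != 0.
Proof.
case: i => [|i]; first by rewrite expr0 -[1 + 1]/(2%:R) pnatr_eq0.
rewrite addrC addr_eq0; apply: contraTneq (norm_qexpS_lt1 i) => ->.
by rewrite normrN normr1 ltxx.
Qed.

Definition qbin n k := f n / (f k * f (n - k)).

Lemma qbinom_nat (n k : nat) : qbinom q n k = if (k <= n)%N then qbin n k else 0.
Proof. by []. Qed.

Lemma qbin0 n : qbin n 0 = 1.
Proof. by rewrite /qbin qfac0 mul1r subn0 divff ?qfac_neq0. Qed.

Lemma qbin_sym n k : (k <= n)%N -> qbin n (n - k) = qbin n k.
Proof. by move=> kn; rewrite /qbin subKn // [f (n - k) * _]mulrC. Qed.

Lemma qbin_mid L r : (r <= L)%N ->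
  qbin (L + L.+1) (L - r) = f (L + L.+1) / (f (L - r) * f (L + r).+1).
Proof. by move=> rL; rewrite /qbin (_ : L + L.+1 - (L - r) = (L + r).+1)%N //; lia. Qed.

Lemma qbinS n k : (k <= n)%N ->
  qbin n.+1 k.+1 = (if (k < n)%N then qbin n k.+1 else 0) + q ^+ (n - k) * qbin n k.
Proof.
move=> kn; rewrite /qbin subSS; case: ltnP => [ltkn|lenk]; last first.
  have -> : k = n by apply/eqP; rewrite eqn_leq kn lenk.
  by rewrite subnn add0r qfac0 expr0 mul1r !mulr1 !divff ?qfac_neq0.
have [d ->] : exists d, n = (k + d.+1)%N by exists (n - k.+1)%N; lia.
have -> : (k + d.+1 - k = d.+1)%N by lia.
have -> : (k + d.+1 - k.+1 = d)%N by lia.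
rewrite !qfacS -addSn exprD.
by field; rewrite !qfac_neq0 !qfac_step_neq0.
Qed.

End QFactorial.

Section Bailey.
Variables (R : numFieldType) (q : R).
Hypothesis hq : `|q| < 1.

Local Notation f := (qfac q).
Let f_neq0 := qfac_neq0 hq.
Let step_neq0 := qfac_step_neq0 hq.

Let durfee_term n c m := q ^+ (m * m + c * m) / (f (n - m) * f m * f (c + m)).

Let durfee_termS n c m : (m <= n)%N ->
  (1 - q ^+ n.+1) * durfee_term n.+1 c m.+1 =
  q ^+ (c + n.+1) * durfee_term n c.+1 m + (if (m < n)%N then durfee_term n c m.+1 else 0).
Proof.
move=> mn; rewrite /durfee_term subSS.
have [d ->] : exists d, n = (m + d)%N by exists (n - m)%N; lia.
have -> : (c + m.+1 = c.+1 + m)%N by lia.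
have -> : (m.+1 * m.+1 + c * m.+1 = (c.+1 + m) + (m * m + c.+1 * m))%N by ring.
rewrite addKn qfacS exprD; case: d => [|d].
  by rewrite addn0 ltnn addr0 -addSnnS; field; rewrite !f_neq0 step_neq0.
have -> : (m < m + d.+1)%N by lia.
have -> : (m + d.+1 - m.+1 = d)%N by lia.
have -> : (c + (m + d.+1).+1 = (c.+1 + m) + d.+1)%N by lia.
have -> : ((m + d.+1).+1 = m.+1 + d.+1)%N by lia.
by rewrite [f d.+1]qfacS !exprD; field; rewrite !f_neq0 !step_neq0.
Qed.

(* A q-Chu-Vandermonde sum; [m * m + c * m] is the size of an m x (m + c)
   Durfee rectangle. *)
Lemma durfee_sum n c :
  \sum_(0 <= m < n.+1) q ^+ (m * m + c * m) / (f (n - m) * f m * f (c + m)) =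
  (f n * f (c + n))^-1.
Proof.
rewrite -[LHS]/(\sum_(0 <= m < n.+1) durfee_term n c m).
elim: n c => [|n IH] c.
  by rewrite big_nat1 /durfee_term !muln0 !addn0 subn0 qfac0 expr0; field; rewrite !f_neq0.
apply: (mulfI (step_neq0 n)).
rewrite big_nat_recl // mulrDr mulr_sumr.
under eq_big_nat => m /andP[_ mn] do rewrite (durfee_termS (m := m) (n := n) c mn).
rewrite big_split /= -mulr_sumr IH big_nat_recr //= ltnn addr0.
rewrite (eq_big_nat _ _ (F2 := fun m => durfee_term n c m.+1)); last by move=> m /andP[_ ->].
have := IH c; rewrite big_nat_recl // => /(canRL (addKr _)) ->.
rewrite /durfee_term !muln0 !addn0 !subn0 expr0 qfac0 !mulr1 mul1r.
have -> : (c.+1 + n = c + n.+1)%N by lia.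
rewrite addnS !qfacS.
by field; rewrite !f_neq0 !step_neq0.
Qed.

Definition bailey_pair (al be : nat -> R) :=
  forall L, be L = \sum_(0 <= r < L.+1) al r / (f (L - r) * f (L + r).+1).

(* Bailey's lemma with both free parameters sent to infinity. *)
Lemma bailey_lemma al be : bailey_pair al be ->
  bailey_pair (fun r => q ^+ (r * r.+1) * al r)
              (fun L => \sum_(0 <= k < L.+1) q ^+ (k * k.+1) * be k / f (L - k)).
Proof.
move=> albe L.
rewrite (eq_big_nat _ _ (F2 := fun k => \sum_(0 <= r < L.+1) if (r <= k)%N
    then q ^+ (k * k.+1) * al r / (f (L - k) * (f (k - r) * f (k + r).+1)) else 0)).
  rewrite (exchange_big_nat _ 0 L.+1 0 L.+1 predT predT) /=.
  apply: eq_big_nat => r /andP[_]; rewrite ltnS => rL.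
  rewrite -big_mkcond -(big_nat_widenl r 0 L.+1 xpredT) // -{1}(add0n r) big_addn subSn //.
  rewrite (eq_big_nat _ _ (F2 := fun m => q ^+ (r * r.+1) * al r *
     (q ^+ (m * m + r.*2.+1 * m) / (f (L - r - m) * f m * f (r.*2.+1 + m))))).
    rewrite -mulr_sumr durfee_sum.
    have -> : (r.*2.+1 + (L - r) = (L + r).+1)%N by rewrite -addnn; lia.
    by field; rewrite !f_neq0.
  move=> m /andP[_ mL].
  have -> : ((m + r) * (m + r).+1 = r * r.+1 + (m * m + r.*2.+1 * m))%N.
    by rewrite -addnn; ring.
  have -> : (m + r - r = m)%N by lia.
  have -> : (L - (m + r) = L - r - m)%N by lia.
  have -> : ((m + r + r).+1 = r.*2.+1 + m)%N by rewrite -addnn; lia.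
  by rewrite exprD; field; rewrite !f_neq0.
move=> k /andP[_ kL].
rewrite albe (big_nat_widen 0 k.+1 L.+1) // big_mkcond mulr_sumr big_distrl /=.
apply: eq_big_nat => r _; rewrite ltnS.
by case: (r <= k)%N; [field; rewrite !f_neq0 | rewrite mulr0 mul0r].
Qed.

End Bailey.

(* [R[w] = R[X]/(X^2 + X + 1)]: the pair [(a, b)] stands for [a + b w]. *)
Section OmegaExt.
Variable R : comNzRingType.

Definition omega_ext := (R * R)%type.
HB.instance Definition _ := GRing.Zmodule.on omega_ext.

Definition omega_mul (x y : omega_ext) : omega_ext :=
  (x.1 * y.1 - x.2 * y.2, x.1 * y.2 + x.2 * y.1 - x.2 * y.2).

Fact omega_mulA : associative omega_mul.
Proof. by case=> a b [c d] [e g]; congr pair; rewrite /=; ring. Qed.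
Fact omega_mulC : commutative omega_mul.
Proof. by case=> a b [c d]; congr pair; rewrite /=; ring. Qed.
Fact omega_mul1 : left_id (1, 0) omega_mul.
Proof. by case=> a b; congr pair; rewrite /=; ring. Qed.
Fact omega_mulDl : left_distributive omega_mul +%R.
Proof. by case=> a b [c d] [e g]; congr pair; rewrite /=; ring. Qed.
Fact omega_one_neq0 : (1, 0) != 0 :> omega_ext.
Proof. by apply/eqP => -[] /eqP; rewrite oner_eq0. Qed.

HB.instance Definition _ := GRing.Zmodule_isComNzRing.Build omega_ext
  omega_mulA omega_mulC omega_mul1 omega_mulDl omega_one_neq0.

Definition to_omega (a : R) : omega_ext := (a, 0).

Fact to_omega_is_zmod_morphism : zmod_morphism to_omega.
Proof. by move=> a b; rewrite /to_omega; congr pair; rewrite /= subr0. Qed.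
Fact to_omega_is_monoid_morphism : monoid_morphism to_omega.
Proof. by split=> // a b; congr pair; rewrite /=; ring. Qed.
HB.instance Definition _ := GRing.isZmodMorphism.Build R omega_ext to_omega
  to_omega_is_zmod_morphism.
HB.instance Definition _ := GRing.isMonoidMorphism.Build R omega_ext to_omega
  to_omega_is_monoid_morphism.

Definition omega : omega_ext := (0, 1).

Lemma omega_sqr : omega ^+ 2 = - 1 - omega.
Proof. by congr pair; rewrite /=; ring. Qed.

Lemma omega_expr3 : omega ^+ 3 = 1.
Proof. by rewrite exprS omega_sqr; congr pair; rewrite /=; ring. Qed.

Lemma omega_expr_mod3 n : omega ^+ n = omega ^+ (n %% 3).
Proof. by rewrite {1}(divn_eq n 3) exprD mulnC exprM omega_expr3 expr1n mul1r. Qed.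

Lemma omega_factor (x : omega_ext) :
  (1 + omega * x) * (1 + omega ^+ 2 * x) = 1 - x + x ^+ 2.
Proof. by rewrite omega_sqr expr2; case: x => a b; congr pair; rewrite /=; ring. Qed.

Lemma snd_sum (I : Type) (r : seq I) (P : pred I) (F : I -> omega_ext) :
  (\sum_(i <- r | P i) F i).2 = \sum_(i <- r | P i) (F i).2.
Proof. by elim/big_rec2: _ => // i y1 y2 _ <-. Qed.

Lemma snd_to_omegaM a (x : omega_ext) : (to_omega a * x).2 = a * x.2.
Proof. by rewrite /= !mul0r subr0 addr0. Qed.

End OmegaExt.

Lemma sum_pascal_step (V : zmodType) (c c' d : nat -> V) N :
  c' 0%N = c 0%N ->
  (forall k, (k <= N)%N -> c' k.+1 = (if (k < N)%N then c k.+1 else 0) + d k) ->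
  \sum_(0 <= k < N.+2) c' k = \sum_(0 <= k < N.+1) c k + \sum_(0 <= k < N.+1) d k.
Proof.
move=> c'0 c'S; rewrite big_nat_recl //.
under eq_big_nat => k /andP[_ kN] do rewrite (c'S k kN).
rewrite big_split /= addrA [in RHS]big_nat_recl // c'0; congr (_ + _ + _).
by rewrite big_nat_recr //= ltnn addr0; apply: eq_big_nat => k /andP[_ ->].
Qed.

Lemma bin2S k : 'C(k.+1, 2) = ('C(k, 2) + k)%N.
Proof. by rewrite binS bin1. Qed.

(* [bin2z b k] is the binomial coefficient [(k - b) choose 2] with [k - b]
   read as an integer. *)
Definition bin2z b k : nat := if (b <= k)%N then 'C(k - b, 2) else 'C((b - k).+1, 2).

Lemma bin2zS b k : (bin2z b k.+1 + b = bin2z b k + k)%N.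
Proof.
rewrite /bin2z; case: (leqP b k) => bk.
  by rewrite ifT ?subSn ?bin2S //; [lia | apply: leqW].
case: (leqP b k.+1) => bk1.
  have -> : (k.+1 - b = 0)%N by lia.
  have -> : (b - k = 1)%N by lia.
  by rewrite bin0n binn; lia.
by rewrite (subnSK bk) bin2S; lia.
Qed.

Lemma bin2z_rev b k : (k <= b)%N -> bin2z b (b - k) = 'C(k.+1, 2).
Proof.
rewrite /bin2z; case: k => [|k] kb; first by rewrite subn0 leqnn subnn.
by rewrite ifF ?subKn //; apply/negbTE; rewrite -ltnNge; lia.
Qed.

Section QBinomialTheorem.
Variables (R : numFieldType) (q : R).
Hypothesis hq : `|q| < 1.
Variables (A : comNzRingType) (phi : {rmorphism R -> A}).

Lemma qbinomial (y : A) N :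
  \prod_(i < N) (1 + y * phi (q ^+ i)) =
  \sum_(0 <= k < N.+1) phi (qbin q N k * q ^+ 'C(k, 2)) * y ^+ k.
Proof.
elim: N => [|N IH]; first by rewrite big_ord0 big_nat1 (qbin0 hq) mul1r expr0 mulr1 rmorph1.
rewrite big_ord_recr /= IH mulrDr mulr1 mulr_suml.
rewrite (sum_pascal_step (c := fun k => phi (qbin q N k * q ^+ 'C(k, 2)) * y ^+ k)
  (d := fun k => phi (qbin q N k * q ^+ 'C(k, 2)) * y ^+ k * (y * phi (q ^+ N)))) ?(qbin0 hq) // => k kN.
have qN : q ^+ N = q ^+ (N - k) * q ^+ k by rewrite -exprD subnK.
rewrite (qbinS hq) // bin2S qN; set a := qbin q N k.+1; set b := qbin q N k.
by case: ltnP => _; rewrite !(rmorphD, rmorphM, rmorphXn, rmorph0) exprD exprS; ring.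
Qed.

Lemma finite_jacobi (y y' : A) a b : y' * y = 1 ->
  y ^+ b * (\prod_(i < a) (1 + y * phi (q ^+ i)) * \prod_(i < b) (1 + y' * phi (q ^+ i.+1))) =
  \sum_(0 <= k < (a + b).+1) phi (qbin q (a + b) k * q ^+ bin2z b k) * y ^+ k.
Proof.
move=> y'y; elim: a => [|a IH].
  rewrite big_ord0 mul1r add0n big_nat_rev /=.
  under eq_bigr do rewrite exprS rmorphM mulrA.
  rewrite qbinomial mulr_sumr; apply: eq_big_nat => k; rewrite ltnS => /andP[_ kb].
  rewrite add0n subSS qbin_sym // bin2z_rev // bin2S exprD -(subnK kb) exprD subnK //.
  have ykk : y ^+ k * y' ^+ k = 1 by rewrite -exprMn mulrC y'y expr1n.
  set c := qbin q b k; rewrite exprMn !rmorphM !rmorphXn.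
  by rewrite -[RHS]mulr1 -ykk; ring.
rewrite big_ord_recr /= mulrAC mulrA IH mulrDr mulr1 mulr_suml addSn.
rewrite (sum_pascal_step (c := fun k => phi (qbin q (a + b) k * q ^+ bin2z b k) * y ^+ k)
  (d := fun k => phi (qbin q (a + b) k * q ^+ bin2z b k) * y ^+ k * (y * phi (q ^+ a)))) ?(qbin0 hq) // => k kab.
have ex : ((a + b) - k + bin2z b k.+1 = bin2z b k + a)%N by have := bin2zS b k; lia.
have -> : qbin q (a + b).+1 k.+1 * q ^+ bin2z b k.+1 =
    (if (k < a + b)%N then qbin q (a + b) k.+1 * q ^+ bin2z b k.+1 else 0) +
    qbin q (a + b) k * q ^+ bin2z b k * q ^+ a.
  by rewrite (qbinS hq) // -mulrA -exprD -ex exprD; case: ifP => _; ring.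
set c1 := qbin q (a + b) k.+1; set c0 := qbin q (a + b) k.
by case: ifP => _; rewrite !(rmorphD, rmorphM, rmorph0) exprS; ring.
Qed.

End QBinomialTheorem.

Section Legendre.
Variable R : numFieldType.

Lemma leg3N j : leg3 R (- j) = - leg3 R j.
Proof.
rewrite /leg3; have : (0 <= j %% 3 < 3)%Z by lia.
case/andP; case E: (j %% 3)%Z => [[|[|[|n]]]|n] // _ _.
- by rewrite (_ : (- j) %% 3 = 0)%Z ?oppr0 //; lia.
- by rewrite (_ : (- j) %% 3 = 2)%Z //; lia.
- by rewrite (_ : (- j) %% 3 = 1)%Z ?opprK //; lia.
Qed.

Lemma leg3D3 j t : leg3 R (j + 3 * t) = leg3 R j.
Proof. by rewrite /leg3; have -> : ((j + 3 * t) %% 3 = j %% 3)%Z by lia. Qed.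

Lemma snd_omega_expr n : (omega R ^+ n).2 = leg3 R n.
Proof.
rewrite omega_expr_mod3 /leg3 modz_nat; have : (n %% 3 < 3)%N by rewrite ltn_mod.
by case: (n %% 3)%N => [|[|[|m]]] // _; rewrite omega_sqr /= oppr0 add0r.
Qed.

End Legendre.

Section SeedPair.
Variables (R : numFieldType) (q : R).
Hypothesis hq : `|q| < 1.

Local Notation f := (qfac q).
Local Notation w := (omega R).
Local Notation phi := (@to_omega R).
Let f_neq0 := qfac_neq0 hq.

Lemma qpochN1_ratio L :
  qpoch (-1) (q ^+ 3) L / qpoch (-1) q L = \prod_(i < L) (1 - q ^+ i + q ^+ i ^+ 2).
Proof.
have den_neq0 : qpoch (-1) q L != 0.
  by apply/prodf_neq0 => i _; rewrite mulN1r opprK oneDqexp_neq0.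
apply: (mulIf den_neq0); rewrite divfK // /qpoch -big_split /=; apply: eq_bigr => i _.
by rewrite !mulN1r !opprK -exprM mulnC exprM; ring.
Qed.

Lemma omega_seed_product L :
  w * (\prod_(i < L) (1 + w * phi (q ^+ i)) * \prod_(i < L.+1) (1 + w ^+ 2 * phi (q ^+ i.+1))) =
  - phi (\prod_(i < L) (1 - q ^+ i + q ^+ i ^+ 2)) *
    ((1 + w ^+ 2 * phi (q ^+ L)) * (1 + w ^+ 2 * phi (q ^+ L.+1))).
Proof.
set T := (1 + _ * phi (q ^+ L)) * _.
have conj_prod : \prod_(i < L) (1 + w * phi (q ^+ i)) * \prod_(i < L) (1 + w ^+ 2 * phi (q ^+ i))
    = phi (\prod_(i < L) (1 - q ^+ i + q ^+ i ^+ 2)).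
  rewrite -big_split rmorph_prod; apply: eq_bigr => i _ /=.
  by rewrite omega_factor rmorphD rmorphB rmorph1 (rmorphXn _ 2).
have shift_prod : (1 + w ^+ 2) * \prod_(i < L.+1) (1 + w ^+ 2 * phi (q ^+ i.+1)) =
    \prod_(i < L) (1 + w ^+ 2 * phi (q ^+ i)) * T.
  have := big_ord_recl L.+1 (fun i : 'I_L.+2 => 1 + w ^+ 2 * phi (q ^+ i)).
  rewrite /bump /= expr0 rmorph1 mulr1 => <-.
  by rewrite !big_ord_recr /= -mulrA.
have unit_w : - w ^+ 2 * (1 + w ^+ 2) = 1.
  by rewrite omega_sqr; congr pair; rewrite /=; ring.
have -> : \prod_(i < L.+1) (1 + w ^+ 2 * phi (q ^+ i.+1)) =
    - w ^+ 2 * (\prod_(i < L) (1 + w ^+ 2 * phi (q ^+ i)) * T).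
  by rewrite -shift_prod mulrA unit_w mul1r.
rewrite -conj_prod.
transitivity (- w ^+ 3 * (\prod_(i < L) (1 + w * phi (q ^+ i)) *
  \prod_(i < L) (1 + w ^+ 2 * phi (q ^+ i))) * T); first by ring.
by rewrite omega_expr3 mulN1r.
Qed.

Lemma seed_sum L :
  \sum_(0 <= k < (L + L.+1).+1) qbin q (L + L.+1) k * q ^+ bin2z L.+1 k * leg3 R (k + L.+1.*2).+1
  = \prod_(i < L) (1 - q ^+ i + q ^+ i ^+ 2) * (q ^+ L + q ^+ L.+1 - q ^+ L * q ^+ L.+1).
Proof.
have w3 : w ^+ 2 * w = 1 by rewrite -exprSr omega_expr3.
transitivity ((w ^+ L.+1.*2.+1 *
    \sum_(0 <= k < (L + L.+1).+1) phi (qbin q (L + L.+1) k * q ^+ bin2z L.+1 k) * w ^+ k).2).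
  rewrite mulr_sumr snd_sum; apply: eq_big_nat => k _.
  by rewrite mulrCA snd_to_omegaM -exprD snd_omega_expr addSn (addnC _ k).
have w3b1 (x : omega_ext R) : w ^+ L.+1.*2.+1 * (w ^+ L.+1 * x) = w * x.
  rewrite mulrA -exprD (_ : L.+1.*2.+1 + L.+1 = 3 * L.+1 + 1)%N; last by rewrite -addnn; lia.
  by rewrite exprD exprM omega_expr3 expr1n mul1r expr1.
rewrite -(finite_jacobi hq _ L L.+1 w3) w3b1 omega_seed_product.
by rewrite -rmorphN snd_to_omegaM omega_sqr /=; ring.
Qed.

Definition bailey_alpha r := leg3 R r.+1 * q ^+ 'C(r, 2) - leg3 R r * q ^+ 'C(r.+2, 2).

Lemma sum_bailey_alpha_qbin L :
  \sum_(0 <= r < L.+1) bailey_alpha r * qbin q (L + L.+1) (L - r)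
  = \prod_(i < L) (1 - q ^+ i + q ^+ i ^+ 2) * (q ^+ L + q ^+ L.+1 - q ^+ L * q ^+ L.+1).
Proof.
have split_le : (L.+1 <= (L + L.+1).+1)%N by lia.
rewrite -seed_sum (big_cat_nat (leq0n L.+1) split_le) /=.
rewrite [X in _ = X + _]big_nat_rev /= (big_addn 0 _ L.+1).
rewrite (_ : (L + L.+1).+1 - L.+1 = L.+1)%N; last by lia.
rewrite -big_split /=.
apply: eq_big_nat => r /andP[_]; rewrite ltnS => rL.
rewrite add0n subSS /bin2z ifF; last by apply/negbTE; rewrite -ltnNge; lia.
rewrite ifT ?addnK; last by lia.
rewrite (_ : L.+1 - (L - r) = r.+1)%N; last by lia.
rewrite (_ : Posz (L - r + L.+1.*2).+1 = - Posz r + 3 * Posz L.+1); last by rewrite -addnn; lia.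
rewrite (_ : Posz (r + L.+1 + L.+1.*2).+1 = Posz r.+1 + 3 * Posz L.+1); last by rewrite -addnn; lia.
have -> : qbin q (L + L.+1) (r + L.+1) = qbin q (L + L.+1) (L - r).
  by rewrite -[in RHS]qbin_sym; [congr qbin; lia | lia].
by rewrite !leg3D3 leg3N /bailey_alpha; ring.
Qed.

Definition seed_beta L := q ^+ L * (f (1 + 2 * L))^-1 *
  (qpoch (-1) (q ^+ 3) L / qpoch (-1) q L) * (1 + q - q ^+ (1 + L)).

Lemma bailey_pair_seed : bailey_pair q bailey_alpha seed_beta.
Proof.
move=> L; have -> : \sum_(0 <= r < L.+1) bailey_alpha r / (f (L - r) * f (L + r).+1) =
    (\sum_(0 <= r < L.+1) bailey_alpha r * qbin q (L + L.+1) (L - r)) / f (L + L.+1).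
  rewrite mulr_suml; apply: eq_big_nat => r /andP[_]; rewrite ltnS => rL.
  by rewrite qbin_mid //; field; rewrite !f_neq0.
rewrite sum_bailey_alpha_qbin /seed_beta qpochN1_ratio.
rewrite (_ : 1 + 2 * L = L + L.+1)%N; last by lia.
by rewrite (addnC 1%N L) addn1 !exprS; field; rewrite !f_neq0.
Qed.

End SeedPair.

Lemma bin2_double r : ('C(r, 2) * 2 = r * r.-1)%N.
Proof. by elim: r => [|r IH] //; rewrite bin2S mulnDl IH; case: r {IH} => [|r] //=; nia. Qed.

Lemma rhs_expS v r : rhs_exp v (Posz r.+1) = Posz (v * (r * r.+1) + 'C(r, 2))%N.
Proof.
have := bin2_double r; rewrite /rhs_exp => bin2r.
have -> : ((2 * v + 1)%N%:Z * (Posz r.+1) ^+ 2 - (2 * v + 3)%N%:Z * Posz r.+1)%R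
    = ((Posz (v * (r * r.+1) + 'C(r, 2))%N - 1) * 2)%R by rewrite expr2; nia.
by rewrite mulzK //; lia.
Qed.

Lemma rhs_expN v r : rhs_exp v (- Posz r) = Posz (v * (r * r.+1) + 'C(r.+2, 2))%N.
Proof.
have := bin2_double r.+2; rewrite /rhs_exp => bin2r.
have -> : ((2 * v + 1)%N%:Z * (- Posz r) ^+ 2 - (2 * v + 3)%N%:Z * (- Posz r))%R
    = ((Posz (v * (r * r.+1) + 'C(r.+2, 2))%N - 1) * 2)%R by rewrite expr2; nia.
by rewrite mulzK //; lia.
Qed.

Section Chain.
Variables (R : numFieldType) (q : R).
Hypothesis hq : `|q| < 1.

Local Notation f := (qfac q).

Fixpoint bailey_chain v L : R :=
  if v is v'.+1 then \sum_(0 <= k < L.+1) q ^+ (k * k.+1) * bailey_chain v' k / f (L - k)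
  else seed_beta q L.

Lemma bailey_pair_chain v :
  bailey_pair q (fun r => q ^+ (v * (r * r.+1)) * bailey_alpha q r) (bailey_chain v).
Proof.
elim: v => [|v IH] L /=.
  by rewrite bailey_pair_seed //; apply: eq_big_nat => r _; rewrite mul0n expr0 mul1r.
rewrite (bailey_lemma hq IH); apply: eq_big_nat => r _.
by rewrite mulrA -exprD mulSn.
Qed.

Lemma rhs_window_sum v L M : (L < M)%N ->
  \sum_(0 <= k < 2 * M + 1) rhs_term v L q (k%:Z - M%:Z) =
  \sum_(0 <= r < L.+1) q ^+ (v * (r * r.+1)) * bailey_alpha q r * qbin q (L + L.+1) (L - r).
Proof.
move=> LM; have split_le : (M.+1 <= 2 * M + 1)%N by lia.
rewrite (big_cat_nat (leq0n M.+1) split_le) /= big_nat_rev /= (big_addn 0 _ M.+1).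
rewrite (_ : 2 * M + 1 - M.+1 = M)%N; last by lia.
have e21 : (2 * L + 1 = L + L.+1)%N by lia.
rewrite (eq_big_nat _ _ (F2 := fun r => if (r < L.+1)%N then
    - leg3 R r * q ^+ (v * (r * r.+1) + 'C(r.+2, 2)) * qbin q (L + L.+1) (L - r) else 0)).
  rewrite [X in _ + X](eq_big_nat _ _ (F2 := fun r => if (r < L.+1)%N then
      leg3 R r.+1 * q ^+ (v * (r * r.+1) + 'C(r, 2)) * qbin q (L + L.+1) (L - r) else 0)).
    rewrite -!big_mkcond -!(big_nat_widen _ _ _ xpredT) ?(leqW LM) //=.
    by rewrite -big_split /=; apply: eq_big_nat => r _; rewrite /bailey_alpha !exprD; ring.
  move=> r _; rewrite (_ : Posz (r + M.+1) - Posz M = Posz r.+1); last by lia.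
  rewrite /rhs_term e21 rhs_expS (_ : Posz L + Posz r.+1 = Posz (L + r.+1)) // qbinom_nat.
  case: ltnP => rL; last by rewrite ifF ?mulr0 //; apply/negbTE; lia.
  rewrite ifT; last by lia.
  by rewrite (_ : L + r.+1 = L + L.+1 - (L - r))%N ?qbin_sym //; lia.
move=> r /andP[_]; rewrite ltnS => rM.
rewrite add0n subSS (_ : Posz (M - r) - Posz M = - Posz r); last by lia.
rewrite /rhs_term e21 leg3N rhs_expN; case: ltnP => rL.
  by rewrite (_ : Posz L + - Posz r = Posz (L - r)) ?qbinom_nat ?ifT //; lia.
by case E: (Posz L + - Posz r) => [n|n]; [lia | rewrite mulr0].
Qed.

End Chain.

Definition ffun_cons (w M : nat) (x : 'I_M) (g : {ffun 'I_w -> 'I_M}) : {ffun 'I_w.+1 -> 'I_M} :=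
  [ffun i => if unlift ord0 i is Some j then g j else x].

Lemma ffun_cons0 w M x (g : {ffun 'I_w -> 'I_M}) : ffun_cons x g ord0 = x.
Proof. by rewrite ffunE unlift_none. Qed.

Lemma ffun_consS w M x (g : {ffun 'I_w -> 'I_M}) j : ffun_cons x g (lift ord0 j) = g j.
Proof. by rewrite ffunE liftK. Qed.

Lemma sum_ffun_cons (V : nmodType) w M (F : {ffun 'I_w.+1 -> 'I_M} -> V) :
  \sum_(n : {ffun 'I_w.+1 -> 'I_M}) F n =
  \sum_(x : 'I_M) \sum_(g : {ffun 'I_w -> 'I_M}) F (ffun_cons x g).
Proof.
rewrite pair_big /= (reindex (fun p : 'I_M * {ffun 'I_w -> 'I_M} => ffun_cons p.1 p.2)) //.
apply: onW_bij; exists (fun n : {ffun 'I_w.+1 -> 'I_M} =>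
  (n ord0, [ffun j : 'I_w => n (lift ord0 j)])) => [[x g] | n] /=.
  by rewrite ffun_cons0; congr pair; apply/ffunP => j; rewrite ffunE ffun_consS.
by apply/ffunP => i; rewrite ffunE; case: unliftP => [j ->|->]; rewrite ?ffunE.
Qed.

Lemma sum_ffun1 (V : nmodType) M (F : {ffun 'I_1 -> 'I_M} -> V) :
  \sum_(n : {ffun 'I_1 -> 'I_M}) F n = \sum_(x : 'I_M) F [ffun => x].
Proof.
rewrite (reindex (fun x : 'I_M => [ffun => x])) //.
apply: onW_bij; exists (fun n : {ffun 'I_1 -> 'I_M} => n ord0) => [x | n]; first by rewrite ffunE.
by apply/ffunP => i; rewrite ffunE (ord1 i).
Qed.

Lemma eq_Ncap v (h1 h2 : 'I_v -> nat) i : h1 =1 h2 -> Ncap h1 i = Ncap h2 i.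
Proof. by move=> eh; apply: eq_bigr => k _; rewrite eh. Qed.

Lemma eq_nlast v (h1 h2 : 'I_v -> nat) : h1 =1 h2 -> nlast h1 = nlast h2.
Proof. by move=> eh; apply: eq_bigr => k _; rewrite eh. Qed.

Lemma Ncap_head w (h : 'I_w.+1 -> nat) :
  Ncap h 0 = (h ord0 + Ncap (fun j : 'I_w => h (lift ord0 j)) 0)%N.
Proof. by rewrite /Ncap !big_mkcond big_ord_recl. Qed.

Lemma Ncap_tail w (h : 'I_w.+1 -> nat) i :
  Ncap h i.+1 = Ncap (fun j : 'I_w => h (lift ord0 j)) i.
Proof.
rewrite /Ncap big_mkcond [RHS]big_mkcond big_ord_recl /= add0n.
by apply: eq_bigr => k _; rewrite /bump /= ltnS.
Qed.

Lemma nlast_tail w (h : 'I_w.+2 -> nat) : nlast h = nlast (fun j : 'I_w.+1 => h (lift ord0 j)).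
Proof.
rewrite /nlast big_mkcond [RHS]big_mkcond big_ord_recl /= add0n.
by apply: eq_bigr => k _; rewrite /bump.
Qed.

Section MultiSum.
Variables (R : numFieldType) (q : R).

Local Notation f := (qfac q).

Definition multisum_term v (n : 'I_v -> nat) : R :=
  q ^+ ((\sum_(i < v) Ncap n i * (Ncap n i).+1) + nlast n)
  * (\prod_(k < v | (val k < v.-1)%N) (f (n k))^-1)
  * (f (1 + 2 * nlast n))^-1
  * (qpoch (-1) (q ^+ 3) (nlast n) / qpoch (-1) q (nlast n))
  * (1 + q - q ^+ (1 + nlast n)).

Lemma lhs_termE v L (n : 'I_v -> nat) :
  lhs_term L q n = multisum_term n * (f (2 * L + 1) * inv_qfac q (L%:Z - (Ncap n 0)%:Z)).
Proof. by rewrite /lhs_term /multisum_term /=; ring. Qed.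

Lemma eq_multisum_term v (h1 h2 : 'I_v -> nat) : h1 =1 h2 -> multisum_term h1 = multisum_term h2.
Proof.
move=> eh; rewrite /multisum_term (eq_nlast eh); congr (q ^+ (_ + _) * _ * _ * _ * _).
  by apply: eq_bigr => i _; rewrite (eq_Ncap _ eh).
by apply: eq_bigr => k _; rewrite eh.
Qed.

Lemma multisum_term_tail w (h : 'I_w.+2 -> nat) :
  multisum_term h = q ^+ (Ncap h 0 * (Ncap h 0).+1) * (f (h ord0))^-1 *
    multisum_term (fun j : 'I_w.+1 => h (lift ord0 j)).
Proof.
set g := fun j : 'I_w.+1 => h (lift ord0 j).
have sumE : (\sum_(i < w.+2) Ncap h i * (Ncap h i).+1 =
    Ncap h 0 * (Ncap h 0).+1 + \sum_(i < w.+1) Ncap g i * (Ncap g i).+1)%N.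
  by rewrite big_ord_recl; congr (_ + _)%N; apply: eq_bigr => i _; rewrite Ncap_tail.
have prodE : \prod_(k < w.+2 | (val k < w.+1)%N) (f (h k))^-1 =
    (f (h ord0))^-1 * \prod_(k < w.+1 | (val k < w)%N) (f (g k))^-1.
  by rewrite big_mkcond big_ord_recl /= [in RHS]big_mkcond.
by rewrite /multisum_term /= sumE prodE -nlast_tail -/g -!addnA exprD; ring.
Qed.

Lemma multisum_term1 (h : 'I_1 -> nat) :
  multisum_term h = q ^+ (h ord0 * (h ord0).+1) * seed_beta q (h ord0).
Proof.
have N1E : Ncap h 0 = h ord0 by rewrite /Ncap big_mkcond big_ord1.
have nvE : nlast h = h ord0 by rewrite /nlast big_mkcond big_ord1.
by rewrite /multisum_term big_ord1 N1E nvE big_mkcond big_ord1 /= /seed_beta exprD; ring.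
Qed.

Variable M : nat.

Definition multisum_at v N := \sum_(n : {ffun 'I_v -> 'I_M})
  (if Ncap (fun k => val (n k)) 0 == N then multisum_term (fun k => val (n k)) else 0).

Lemma multisum_at1 N : (N < M)%N -> multisum_at 1 N = q ^+ (N * N.+1) * seed_beta q N.
Proof.
move=> NM; rewrite /multisum_at sum_ffun1.
under eq_bigr => x _.
  rewrite (eq_Ncap _ (h2 := fun=> val x)) => [|k]; last by rewrite ffunE.
  rewrite (eq_multisum_term (h2 := fun=> val x)) => [|k]; last by rewrite ffunE.
  rewrite /Ncap big_mkcond big_ord1 /= multisum_term1.
over.
by rewrite -big_mkcond (big_pred1 (Ordinal NM)) // => x; apply: val_eqE.
Qed.

Lemma multisum_atS w N : (N < M)%N -> multisum_at w.+2 N = \sum_(x : 'I_M)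
  (if (x <= N)%N then q ^+ (N * N.+1) * (f x)^-1 * multisum_at w.+1 (N - x)%N else 0).
Proof.
move=> NM; rewrite /multisum_at sum_ffun_cons; apply: eq_bigr => x _.
have N1E g : Ncap (fun k => val (ffun_cons x g k)) 0 = (x + Ncap (fun k => val (g k)) 0)%N.
  by rewrite Ncap_head ffun_cons0; congr (_ + _)%N; apply: eq_Ncap => k; rewrite ffun_consS.
under eq_bigr => g _.
  rewrite multisum_term_tail N1E ffun_cons0.
  rewrite (eq_multisum_term (h2 := fun k => val (g k))) => [|k]; last by rewrite ffun_consS.
over.
case: leqP => xN; last first.
  by rewrite big1 // => g _; rewrite ifF //; apply/negbTE; lia.
rewrite mulr_sumr; apply: eq_bigr => g _.
case: eqP => [<- | N1_neq]; first by rewrite addKn eqxx.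
case: eqP => [N1E' | _]; last by rewrite mulr0.
by case: N1_neq; lia.
Qed.

Lemma multisum_atE w N : (N < M)%N -> multisum_at w.+1 N = q ^+ (N * N.+1) * bailey_chain q w N.
Proof.
elim: w N => [|w IH] N NM; first exact: multisum_at1.
rewrite multisum_atS // -(big_mkord xpredT (fun t => if (t <= N)%N then
  q ^+ (N * N.+1) * (f t)^-1 * multisum_at w.+1 (N - t)%N else 0)) -big_mkcond /=.
rewrite (eq_bigl (fun t => t < N.+1)%N) // -(big_nat_widen _ _ _ xpredT) //.
rewrite mulr_sumr big_nat_rev; apply: eq_big_nat => k; rewrite ltnS => /andP[_ kN].
by rewrite add0n subSS subKn // IH; [ring | lia].
Qed.

Lemma inv_qfac_subE L m :
  inv_qfac q (L%:Z - m%:Z) = \sum_(0 <= N < L.+1) (if m == N then (f (L - N))^-1 else 0).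
Proof.
under eq_big_nat do rewrite eq_sym.
rewrite -big_mkcond big_nat1_eq /=; case: ltnP => mL.
  by rewrite (_ : L%:Z - m%:Z = (L - m)%N); [ | lia].
by case E: (L%:Z - m%:Z) => [n|n] //; lia.
Qed.

Lemma sum_lhs_term w L : (L < M)%N ->
  \sum_(n : {ffun 'I_w.+1 -> 'I_M}) lhs_term L q (fun k => val (n k)) =
  f (2 * L + 1) * bailey_chain q w.+1 L.
Proof.
move=> LM; under eq_bigr do rewrite lhs_termE inv_qfac_subE !mulr_sumr.
rewrite exchange_big /= mulr_sumr; apply: eq_big_nat => N; rewrite ltnS => /andP[_ NL].
rewrite -(multisum_atE w (N := N)); last by lia.
rewrite /multisum_at mulr_suml mulr_sumr; apply: eq_bigr => n _.
by case: eqP => _; rewrite ?mulr0 ?mul0r //; ring.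
Qed.

End MultiSum.

Theorem mainTheorem9 (R : numFieldType) (q : R) (v L M : nat) :
  `|q| < 1 -> (1 <= v)%N -> (L < M)%N ->
  \sum_(n : {ffun 'I_v -> 'I_M}) lhs_term L q (fun k => val (n k))
  = \sum_(0 <= k < 2 * M + 1) rhs_term v L q (k%:Z - M%:Z).
Proof.
move=> hq v_gt0 LM; case: v v_gt0 => [//|w] _.
rewrite sum_lhs_term // rhs_window_sum // (bailey_pair_chain hq) mulr_sumr.
apply: eq_big_nat => r /andP[_]; rewrite ltnS => rL.
by rewrite qbin_mid // (_ : 2 * L + 1 = L + L.+1)%N; [ring | lia].
Qed.
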